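(* For the complete graph $K_6$, with $\Pi_1,\dots,\Pi_{10}$ its pairs of disjoint odd cycles (triangles), there is no choice of edges $b^1,\dots,b^{10}$ with $b^i$ a bridge of $\Pi_i$ such that: for each $i$, the even closed walk $E_i$ of $b^i$ in $\Pi_i$ contains at most $2$ edges of $\{b^1,\dots,b^{10}\}\setminus\{b^i\}$, and the number of indices $i$ for which $E_i$ contains exactly $2$ edges of $\{b^1,\dots,b^{10}\}\setminus\{b^i\}$ is at most $2$.
   Context: Two odd cycles are disjoint if they have no common vertex. A bridge of a pair $(C,C')$ of disjoint odd cycles is an edge with one endpoint on $C$ and the other on $C'$. For a bridge $b=\{u,v\}$ of $(C,C')$ with $u\in C$, $v\in C'$, the even closed walk of $b$ in $(C,C')$ is the closed walk obtained by traversing $C$ once starting and ending at $u$, then $b$ from $u$ to $v$, then traversing $C'$ once starting and ending at $v$, then $b$ back from $v$ to $u$. An edge is contained in the walk if it occurs in it. *)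

From mathcomp Require Import all_boot.
Set Implicit Arguments. Unset Strict Implicit. Unset Printing Implicit Defensive.

Definition V := 'I_6.
Definition is_edge (e : {set V}) : bool := #|e| == 2.

(* Odd cycles of K_6 that occur in pairs of disjoint odd cycles are triangles;
   a triangle of K_6 is determined by its 3-element vertex set. *)
Definition is_triangle (C : {set V}) : bool := #|C| == 3.

Definition tri_edges (C : {set V}) : {set {set V}} :=
  [set e | is_edge e & e \subset C].

Definition is_pair (P : {set {set V}}) : bool :=
  [exists C : {set V}, exists C' : {set V},
     [&& is_triangle C, is_triangle C', [disjoint C & C'] & P == [set C; C']]].

Definition pairs : {set {set {set V}}} := [set P | is_pair P].

Definition is_bridge (P : {set {set V}}) (b : {set V}) : bool :=
  [exists C in P, exists C' in P,
     (C != C') && [exists u in C, exists v in C', b == [set u; v]]].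

(* Edges contained in the even closed walk of bridge b in P = {C, C'}:
   the edges of C, the edges of C', and b. *)
Definition walk_edges (P : {set {set V}}) (b : {set V}) : {set {set V}} :=
  (\bigcup_(C in P) tri_edges C) :|: [set b].

From mathcomp Require Import all_boot zify.
Set Implicit Arguments. Unset Strict Implicit. Unset Printing Implicit Defensive.

(* Since the bridge of a pair joins its two triangles, the count of a pair is
   the number of chosen bridges lying inside its triangles.  Any two edges of
   K_6 lie inside the triangles of a common pair: in one triangle if they
   share a vertex, in opposite triangles otherwise.  Hence if the chosen
   bridges formed three distinct edges, each two of them would give a pair of
   count 2, and these three pairs are distinct since no count exceeds 2.  If
   they formed at most two edges, these would lie inside the triangles of one
   pair, whose own bridge would then be both a chosen bridge and inside its
   triangles. *)

Lemma subset_extend_card (T : finType) (A : {set T}) n :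
  #|A| <= n <= #|T| -> exists2 B : {set T}, A \subset B & #|B| = n.
Proof.
elim: n => [|n IHn] /andP [An nT].
  by exists A => //; apply/eqP; rewrite -leqn0.
move: An; rewrite leq_eqVlt => /orP [/eqP <- | An]; first by exists A.
have /IHn [B AB Bn] : #|A| <= n <= #|T| by rewrite -ltnS An ltnW.
have [x xNB] : exists x, x \in ~: B.
  by apply/card_gt0P; rewrite -(ltn_add2l #|B|) addn0 cardsC Bn.
exists (x |: B); first exact: subset_trans AB (subsetU1 x B).
by move: xNB; rewrite inE cardsU1 Bn => ->.
Qed.

Section CoveringBlocks.

Variables (T U : finType) (S : {set T}) (F : T -> {set U}) (A : {set U}).
Hypothesis cover2 : forall x y, x \in A -> y \in A ->
  exists2 t, t \in S & (x \in F t) && (y \in F t).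

Lemma card_le2_sub_block :
  A != set0 -> #|A| <= 2 -> exists2 t, t \in S & A \subset F t.
Proof.
case/set0Pn=> x xA; rewrite (cardsD1 x) xA ltnS => /card_le1P A'1.
have [y yA A'y] : exists2 y, y \in A & A :\ x \subset [set y].
  have [-> | [y yA']] := set_0Vmem (A :\ x); first by exists x; rewrite ?sub0set.
  exists y; first by move: yA'; rewrite inE => /andP [].
  by apply/subsetP=> z zA'; rewrite inE -[z == y]/(z \in pred1 y) -(A'1 y yA').
have [t tS /andP [xt yt]] := cover2 xA yA.
exists t => //; rewrite -(setD1K xA) subUset sub1set xt.
by rewrite (subset_trans A'y) // sub1set.
Qed.

Lemma card_gt2_saturated_blocks :
  (forall t, t \in S -> #|F t :&: A| <= 2) -> 2 < #|A| ->
  2 < #|[set t in S | #|F t :&: A| == 2]|.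
Proof.
move=> FA_le2 /card_gt2P [x [y [z [[xA yA zA] [xy yz zx]]]]].
have saturated_block a c d :
    a \in A -> c \in A -> d \in A -> a != c -> c != d -> d != a ->
    exists2 t, t \in [set t in S | #|F t :&: A| == 2]
             & [&& a \in F t, c \in F t & d \notin F t].
  move=> aA cA dA ac cd da; have [t tS /andP [aFt cFt]] := cover2 aA cA.
  have two_in : 1 < #|F t :&: A|.
    by apply/card_gt1P; exists a, c; rewrite !inE aFt cFt aA cA.
  exists t; first by rewrite inE tS eqn_leq FA_le2.
  rewrite aFt cFt /=; apply: contraTN (FA_le2 t tS) => dFt; rewrite -ltnNge.
  by apply/card_gt2P; exists a, c, d; rewrite !inE aFt cFt dFt aA cA dA.
have [t1 t1full /and3P [xt1 yt1 zt1]] := saturated_block x y z xA yA zA xy yz zx.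
have [t2 t2full /and3P [yt2 zt2 xt2]] := saturated_block y z x yA zA xA yz zx xy.
have [t3 t3full /and3P [zt3 xt3 yt3]] := saturated_block z x y zA xA yA zx xy yz.
apply/card_gt2P; exists t1, t2, t3; split=> //.
split; apply/eqP=> t_eq.
- by move: zt1; rewrite t_eq zt2.
- by move: xt2; rewrite t_eq xt3.
- by move: yt3; rewrite t_eq yt1.
Qed.

End CoveringBlocks.

Definition inner_edges (P : {set {set V}}) : {set {set V}} :=
  \bigcup_(C in P) tri_edges C.

Lemma bridgeP P b : P \in pairs -> is_bridge P b ->
  exists C C' u v,
    [/\ P = [set C; C'], [disjoint C & C'], u \in C, v \in C' & b = [set u; v]].
Proof.
rewrite inE => /existsP [D /existsP [D' /and4P [_ _ dDD' /eqP ->]]].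
case/existsP=> C /andP [CP /existsP [C' /andP [C'P /andP [CC']]]].
case/existsP=> u /andP [uC /existsP [v /andP [vC' /eqP ->]]].
move: CP C'P CC' uC vC'; rewrite !inE.
case/orP=> /eqP -> /orP [] /eqP -> //; rewrite ?eqxx // => _ uC vC'.
- by exists D, D', u, v.
- by exists D', D, u, v; rewrite setUC disjoint_sym.
Qed.

Lemma bridge_edge P b : P \in pairs -> is_bridge P b -> is_edge b.
Proof.
move=> /bridgeP /[apply] [[C [C' [u [v [_ dCC' uC vC' ->]]]]]].
have uv : u != v by apply: contraTneq vC' => <-; rewrite (disjointFr dCC' uC).
by rewrite /is_edge cards2 uv.
Qed.

Lemma bridge_notin_inner P b : P \in pairs -> is_bridge P b ->
  b \notin inner_edges P.
Proof.
move=> /bridgeP /[apply] [[C [C' [u [v [-> dCC' uC vC' ->]]]]]].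
apply/bigcupP=> [[D]]; rewrite !inE subUset !sub1set => /pred2P [] -> /andP [_].
- by rewrite (disjointFl dCC' vC') andbF.
- by rewrite (disjointFr dCC' uC).
Qed.

Lemma walk_edges_bridge P b B : P \in pairs -> is_bridge P b ->
  walk_edges P b :&: (B :\ b) = inner_edges P :&: B.
Proof.
move=> PP bP; apply/setP=> e; rewrite !inE -/(inner_edges P).
have [-> | _] := eqVneq e b; last by rewrite orbF.
by rewrite (negbTE (bridge_notin_inner PP bP)).
Qed.

Lemma pair_of_triangle (C : {set V}) : #|C| = 3 -> [set C; ~: C] \in pairs.
Proof.
move=> C3; have C'3 : #|~: C| = 3.
  by apply/eqP; rewrite -(eqn_add2l 3) -{1}C3 cardsC card_ord.
rewrite inE /is_pair; apply/existsP; exists C; apply/existsP; exists (~: C).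
by rewrite /is_triangle C3 C'3 disjoints_subset setCK subxx !eqxx.
Qed.

Lemma inner_edges_complement (C e : {set V}) :
  (e \in inner_edges [set C; ~: C]) = is_edge e && ((e \subset C) || (e \subset ~: C)).
Proof.
rewrite /inner_edges bigcup_setU !big_set1 !inE.
by case: (is_edge e).
Qed.

Lemma triangle_split (e f : {set V}) : is_edge e -> is_edge f ->
  exists2 C : {set V}, #|C| = 3 & (e \subset C) && ((f \subset C) || (f \subset ~: C)).
Proof.
move=> /eqP e2 /eqP f2; have [ef | nef] := boolP [disjoint e & f].
  have ef4 : #|e :|: f| = 4 by rewrite cardsU disjoint_setI0 // cards0 e2 f2.
  have [p] : exists p, p \in ~: (e :|: f).
    by apply/card_gt0P; rewrite cardsCs setCK card_ord ef4.
  rewrite !inE negb_or => /andP [pNe pNf].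
  exists (p |: e); first by rewrite cardsU1 pNe e2.
  rewrite subsetU1 /=; apply/orP; right; apply/subsetP=> x xf.
  by rewrite !inE negb_or (disjointFl ef xf) andbT; apply: contraNneq pNf => <-.
have ef_le3 : #|e :|: f| <= 3.
  have : 0 < #|e :&: f| by rewrite card_gt0 setI_eq0.
  by rewrite cardsU e2 f2; lia.
have [C efC C3] : exists2 C : {set V}, e :|: f \subset C & #|C| = 3.
  by apply: subset_extend_card; rewrite ef_le3 card_ord.
by exists C => //; move: efC; rewrite subUset => /andP [-> ->].
Qed.

Lemma edges_in_common_pair (e f : {set V}) : is_edge e -> is_edge f ->
  exists2 P, P \in pairs & (e \in inner_edges P) && (f \in inner_edges P).
Proof.
move=> ee ef; have [C C3 /andP [eC fC]] := triangle_split ee ef.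
exists [set C; ~: C]; first exact: pair_of_triangle.
by rewrite !inner_edges_complement ee ef eC fC.
Qed.

Theorem theorem3p3 :
  ~ exists b : {set {set V}} -> {set V},
      let B := [set b P | P in pairs] in
      let cnt := fun P => #|walk_edges P (b P) :&: (B :\ b P)| in
      [/\ (forall P, P \in pairs -> is_bridge P (b P)),
          (forall P, P \in pairs -> cnt P <= 2)
        & #|[set P in pairs | cnt P == 2]| <= 2].
Proof.
case=> b /=; set B := [set b P | P in pairs] => -[bridge cnt_le2 full_le2].
have cntE P : P \in pairs ->
    #|walk_edges P (b P) :&: (B :\ b P)| = #|inner_edges P :&: B|.
  by move=> PP; rewrite walk_edges_bridge // bridge.
have B_edge e : e \in B -> is_edge e.
  by case/imsetP=> P PP ->; exact: bridge_edge PP (bridge P PP).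
have cover2 e f : e \in B -> f \in B ->
    exists2 P, P \in pairs & (e \in inner_edges P) && (f \in inner_edges P).
  by move=> /B_edge ee /B_edge ef; exact: edges_in_common_pair.
have [B_gt2 | B_le2] := ltnP 2 #|B|.
  have inner_le2 P : P \in pairs -> #|inner_edges P :&: B| <= 2.
    by move=> PP; rewrite -cntE ?cnt_le2.
  have := card_gt2_saturated_blocks cover2 inner_le2 B_gt2.
  rewrite ltnNge (leq_trans _ full_le2) // subset_leq_card //.
  apply/subsetP=> P; rewrite inE => /andP [PP]; rewrite inE PP -cntE //.
have e0 : is_edge [set ord0; ord_max] by rewrite /is_edge cards2.
have [P0 P0P _] := edges_in_common_pair e0 e0.
have B0 : B != set0 by apply/set0Pn; exists (b P0); exact: imset_f.
have [P PP BP] := card_le2_sub_block cover2 B0 B_le2.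
have := bridge_notin_inner PP (bridge P PP).
by rewrite (subsetP BP) // imset_f.
Qed.
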